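(* Let $b > 0$ with $b \neq 1$, let $p > 0$, and let $\epsilon \in (0,1)$. The fast approximate exponentiation algorithm described below, run on base $b$, exponent $p$ and a depth $i = \mathcal{O}\left(\log\left(\frac{|\log b|}{\epsilon}\right)\right)$, outputs a number $r$ satisfying $(1-\epsilon)\, b^p \leq r \leq (1+\epsilon)\, b^p$, i.e. a $(1\pm\epsilon)$-approximation of $b^p$, after performing $\mathcal{O}\left(\log\left(\frac{|\log b|}{\epsilon}\right)\right)$ operations.
   Context: Fast approximate exponentiation algorithm (input: base $b>0$, exponent $p>0$, depth $i\in\mathbb{N}$), using only multiplications, divisions and square roots. Write $p = z + f$ with $z = \lfloor p \rfloor$ and $f = p - \lfloor p\rfloor \in [0,1)$. (1) Compute $b^{z}$ exactly by binary exponentiation: if $z = \sum_{j=0}^{t} 2^{t-j} c_j$ is the binary representation of $z$ ($c_0 = 1$), set $n_0 = 1$, $n_j = 2 n_{j-1} + c_j$, and correspondingly $b^{n_j} = (b^{n_{j-1}})^2 b^{c_j}$. (2) Approximate $b^{f}$ by $b^{f'}$ where $f' = \sum_{j=1}^{i} s_j 2^{-j}$ is a dyadic rational built greedily: $s_1 = 1$, and for $j>1$, $s_j = 1$ if the current partial sum $\sum_{l<j} s_l 2^{-l}$ is less than $f$, $s_j = -1$ if it is greater than $f$, and the process stops if it equals $f$; so $|f - f'| \leq 2^{-i}$. The power $b^{f'}$ is accumulated by computing successive square roots $b^{1/2^j}$ and multiplying (if $s_j=1$) or dividing (if $s_j=-1$) by $b^{1/2^j}$. The output is $r = b^{z}\,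 b^{f'}$. *)

From Stdlib Require Import Reals Lra Lia ZArith.
Open Scope R_scope.

(* Operations counted: multiplications, divisions, square roots
   (comparisons / bookkeeping of the dyadic partial sum are not counted). *)

(* Step (1): binary exponentiation, reading the binary digits of z > 0 from
   the most significant one (c_0 = 1): b^{n_j} = (b^{n_{j-1}})^2 * b^{c_j}.
   Returns (value, number of operations). *)
Fixpoint bin_exp (b : R) (z : positive) : R * nat :=
  match z with
  | xH => (b, 0%nat)
  | xO q => let (v, k) := bin_exp b q in (v * v, S k)
  | xI q => let (v, k) := bin_exp b q in (v * v * b, S (S k))
  end.

Definition int_pow (b : R) (z : Z) : R * nat :=
  match z with
  | Zpos q => bin_exp b q
  | _ => (1, 0%nat)
  end.

(* Step (2): greedy dyadic approximation of b^f.
   [frac_loop n j f s acc r ops]: n remaining steps, j = index of the current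
   step, s = current partial sum sum_{l<j} s_l 2^{-l}, acc = b^s,
   r = b^{1/2^{j-1}}. *)
Fixpoint frac_loop (n j : nat) (f s acc r : R) (ops : nat) : R * nat :=
  match n with
  | O => (acc, ops)
  | S m =>
      let r' := sqrt r in
      if Nat.eqb j 1 then
        frac_loop m (S j) f (s + / 2 ^ j) (acc * r') r' (ops + 2)
      else if Rlt_dec s f then
        frac_loop m (S j) f (s + / 2 ^ j) (acc * r') r' (ops + 2)
      else if Rlt_dec f s then
        frac_loop m (S j) f (s - / 2 ^ j) (acc / r') r' (ops + 2)
      else (acc, ops)
  end.

Definition fast_exp (b p : R) (i : nat) : R * nat :=
  let (bz, k1) := int_pow b (Int_part p) in
  let (bf, k2) := frac_loop i 1 (frac_part p) 0 1 b 0 in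
  (bz * bf, (k1 + k2 + 1)%nat).

(* The quantity log(|log b| / eps) inside the O(.), clipped below at 0
   (so that 1 + LogTerm b eps >= 1 is a sensible O-bound). *)
Definition LogTerm (b eps : R) : R := Rmax 0 (ln (Rabs (ln b) / eps)).

From Stdlib Require Import Reals Lra Lia ZArith.
Open Scope R_scope.

(* b^z is computed exactly, and the fractional loop keeps its accumulator
   equal to b^s for the current dyadic partial sum s, while the greedy signs
   halve the bound on |f - s| at each step.  So after i = N + 1 steps the output
   is b^p * exp (d ln b) with |d| <= 2^-i; choosing 2^N >= |ln b| / eps, i.e.
   N = O(log (|ln b| / eps)), puts |d ln b| <= eps / 2, hence the factor in
   [1 - eps, 1 + eps].  Each step costs two operations, and the integer part
   a number depending on p only. *)

Lemma Rabs_le_iff x y : Rabs x <= y <-> - y <= x <= y.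
Proof. unfold Rabs; destruct (Rcase_abs x); split; intros; lra. Qed.

Lemma sqrt_Rpower b x : sqrt (Rpower b x) = Rpower b (x / 2).
Proof.
  rewrite <- (sqrt_square (Rpower b (x / 2))) by (left; apply exp_pos).
  rewrite <- Rpower_plus. f_equal. f_equal. field.
Qed.

Lemma Rpower_minus b x y : Rpower b (x - y) = Rpower b x / Rpower b y.
Proof. unfold Rminus, Rdiv. rewrite Rpower_plus, Rpower_Ropp. reflexivity. Qed.

Lemma exp_near_one x eps : 0 < eps < 1 -> Rabs x <= eps / 2 ->
  1 - eps <= exp x <= 1 + eps.
Proof.
  intros Heps Hx. apply Rabs_le_iff in Hx.
  pose proof (exp_ineq1_le x). pose proof (exp_ineq1_le (- x)).
  assert (exp x * exp (- x) = 1)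
    by (rewrite <- exp_plus, Rplus_opp_r; apply exp_0).
  pose proof (exp_pos x). pose proof (exp_pos (- x)).
  split; nra.
Qed.

Lemma Rpower_add_rel_error b x d eps : 0 < eps < 1 -> Rabs (d * ln b) <= eps / 2 ->
  (1 - eps) * Rpower b x <= Rpower b (x + d) <= (1 + eps) * Rpower b x.
Proof.
  intros Heps Hd.
  rewrite Rpower_plus.
  pose proof (exp_near_one _ _ Heps Hd).
  pose proof (exp_pos (x * ln b)).
  unfold Rpower in *. split; nra.
Qed.

Lemma pow2_exponent_bound A : 0 < A ->
  exists N : nat, INR N <= 2 * Rmax 0 (ln A) + 1 /\ A <= 2 ^ N.
Proof.
  intros HA. set (M := Rmax 0 (ln A)).
  assert (HM : 0 <= M /\ ln A <= M) by (split; [apply Rmax_l | apply Rmax_r]).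
  destruct (archimed (2 * M)) as [Hup1 Hup2].
  assert (Hup0 : (0 <= up (2 * M))%Z) by (apply le_IZR; lra).
  exists (Z.to_nat (up (2 * M))).
  assert (HN : INR (Z.to_nat (up (2 * M))) = IZR (up (2 * M)))
    by (rewrite INR_IZR_INZ, Z2Nat.id; auto).
  split; [lra|].
  rewrite <- (Rpower_Rlog 2 A), <- Rpower_pow by lra.
  apply Rle_Rpower; [lra|].
  pose proof ln_lt_2.
  unfold Rlog, Rdiv. apply Rmult_le_reg_r with (ln 2); [lra|].
  rewrite Rmult_assoc, Rinv_l, Rmult_1_r by lra. nra.
Qed.

Lemma Rabs_mul_dyadic_le d L eps N : 0 < eps ->
  Rabs d <= / 2 ^ S N -> Rabs L / eps <= 2 ^ N -> Rabs (d * L) <= eps / 2.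
Proof.
  intros Heps Hd HN.
  assert (H2N : 0 < 2 ^ N) by (apply pow_lt; lra).
  rewrite Rabs_mult.
  apply Rle_trans with (/ 2 ^ S N * Rabs L).
  - apply Rmult_le_compat_r; [apply Rabs_pos | exact Hd].
  - assert (HL : Rabs L <= eps * 2 ^ N).
    { replace (Rabs L) with (eps * (Rabs L / eps)) by (field; lra).
      apply Rmult_le_compat_l; lra. }
    simpl. apply Rmult_le_reg_l with (2 * 2 ^ N); [lra|].
    replace (2 * 2 ^ N * (/ (2 * 2 ^ N) * Rabs L)) with (Rabs L) by (field; lra).
    lra.
Qed.

Lemma greedy_step_up f s d : s < f -> Rabs (f - s) <= 2 * d ->
  Rabs (f - (s + d)) <= d.
Proof. rewrite !Rabs_le_iff. lra. Qed.

Lemma greedy_step_down f s d : f < s -> Rabs (f - s) <= 2 * d ->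
  Rabs (f - (s - d)) <= d.
Proof. rewrite !Rabs_le_iff. lra. Qed.

Lemma frac_loop_invariant b f n : forall k s ops,
  Rabs (f - s) <= / 2 ^ S k ->
  exists s',
    fst (frac_loop n (S (S k)) f s (Rpower b s) (Rpower b (/ 2 ^ S k)) ops)
      = Rpower b s' /\
    Rabs (f - s') <= / 2 ^ (S k + n) /\
    (snd (frac_loop n (S (S k)) f s (Rpower b s) (Rpower b (/ 2 ^ S k)) ops)
      <= ops + 2 * n)%nat.
Proof.
  induction n as [|n IH]; intros k s ops Hs.
  - exists s. rewrite Nat.add_0_r. repeat split; auto; simpl; lia.
  - assert (Hhalf : / 2 ^ S k = 2 * / 2 ^ S (S k))
      by (simpl; field; apply pow_nonzero; lra).
    assert (Hroot : sqrt (Rpower b (/ 2 ^ S k)) = Rpower b (/ 2 ^ S (S k)))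
      by (rewrite sqrt_Rpower, Hhalf; f_equal; field; apply pow_nonzero; lra).
    assert (Hnext : forall s1, Rabs (f - s1) <= / 2 ^ S (S k) ->
      exists s', fst (frac_loop n (S (S (S k))) f s1 (Rpower b s1)
                   (Rpower b (/ 2 ^ S (S k))) (ops + 2)) = Rpower b s' /\
        Rabs (f - s') <= / 2 ^ (S k + S n) /\
        (snd (frac_loop n (S (S (S k))) f s1 (Rpower b s1)
                (Rpower b (/ 2 ^ S (S k))) (ops + 2)) <= ops + 2 * S n)%nat).
    { intros s1 Hs1. destruct (IH (S k) s1 (ops + 2)%nat Hs1) as (s' & Hv & Hd & Ho).
      exists s'. replace (S k + S n)%nat with (S (S k) + n)%nat by lia.
      repeat split; auto; lia. }
    cbn [frac_loop Nat.eqb]. rewrite Hroot.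
    destruct (Rlt_dec s f) as [Hlt|Hge]; [|destruct (Rlt_dec f s) as [Hgt|Hle]].
    + rewrite <- Rpower_plus. apply Hnext, greedy_step_up; [exact Hlt | lra].
    + rewrite <- Rpower_minus. apply Hnext, greedy_step_down; [exact Hgt | lra].
    + exists s. cbn [fst snd]. repeat split; auto; try lia.
      replace (f - s) with 0 by lra. rewrite Rabs_R0.
      left. apply Rinv_0_lt_compat, pow_lt; lra.
Qed.

Lemma frac_loop_spec b f n : 0 < b -> 0 <= f < 1 ->
  exists s, fst (frac_loop (S n) 1 f 0 1 b 0) = Rpower b s /\
    Rabs (f - s) <= / 2 ^ S n /\
    (snd (frac_loop (S n) 1 f 0 1 b 0) <= 2 * S n)%nat.
Proof.
  intros Hb Hf. cbn [frac_loop Nat.eqb].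
  assert (Hroot : sqrt b = Rpower b (/ 2 ^ 1))
    by (rewrite pow_1, Rpower_sqrt; auto).
  replace (1 * sqrt b) with (Rpower b (0 + / 2 ^ 1))
    by (rewrite Rplus_0_l, <- Hroot; ring).
  rewrite Hroot.
  destruct (frac_loop_invariant b f n 0 (0 + / 2 ^ 1) (0 + 2))
    as (s & Hv & Hd & Ho).
  { apply Rabs_le_iff. simpl. lra. }
  exists s. repeat split; auto; lia.
Qed.

Lemma bin_exp_val b q : fst (bin_exp b q) = b ^ Pos.to_nat q.
Proof.
  induction q as [q IH|q IH|]; cbn [bin_exp].
  - destruct (bin_exp b q) as [v k]. cbn [fst] in *. subst.
    rewrite Pos2Nat.inj_xI. simpl. rewrite Nat.add_0_r, pow_add. ring.
  - destruct (bin_exp b q) as [v k]. cbn [fst] in *. subst.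
    rewrite Pos2Nat.inj_xO. simpl. rewrite Nat.add_0_r, pow_add. ring.
  - simpl. ring.
Qed.

Lemma bin_exp_ops_base_indep b b' q : snd (bin_exp b q) = snd (bin_exp b' q).
Proof.
  induction q as [q IH|q IH|]; simpl; auto;
    destruct (bin_exp b q), (bin_exp b' q); simpl in *; subst; auto.
Qed.

Lemma int_pow_val b z : 0 < b -> (0 <= z)%Z -> fst (int_pow b z) = Rpower b (IZR z).
Proof.
  intros Hb Hz. destruct z as [|q|q]; simpl.
  - rewrite Rpower_O; auto.
  - rewrite bin_exp_val, <- Rpower_pow, INR_IZR_INZ, positive_nat_Z; auto.
  - lia.
Qed.

Lemma int_pow_ops_base_indep b z : snd (int_pow b z) = snd (int_pow 1 z).
Proof. destruct z; simpl; auto using bin_exp_ops_base_indep. Qed.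

Lemma fast_exp_spec b p n : 0 < b -> 0 <= p ->
  exists d, fst (fast_exp b p (S n)) = Rpower b (p + d) /\
    Rabs d <= / 2 ^ S n /\
    (snd (fast_exp b p (S n)) <= snd (int_pow 1 (Int_part p)) + 2 * S n + 1)%nat.
Proof.
  intros Hb Hp.
  destruct (base_Int_part p) as [HI1 HI2].
  destruct (base_fp p) as [HF1 HF2].
  assert (Hz : (0 <= Int_part p)%Z)
    by (assert (-1 < Int_part p)%Z by (apply lt_IZR; lra); lia).
  destruct (frac_loop_spec b (frac_part p) n Hb (conj (Rge_le _ _ HF1) HF2))
    as (s & Hv & Hd & Ho).
  pose proof (int_pow_val b _ Hb Hz) as Hzv.
  pose proof (int_pow_ops_base_indep b (Int_part p)) as Hzo.
  unfold fast_exp.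
  destruct (int_pow b (Int_part p)) as [bz k1],
    (frac_loop (S n) 1 (frac_part p) 0 1 b 0) as [bf k2].
  cbn [fst snd] in *. subst.
  exists (s - frac_part p). repeat split.
  - rewrite <- Rpower_plus. f_equal. unfold frac_part. ring.
  - rewrite Rabs_minus_sym. exact Hd.
  - lia.
Qed.

Theorem theorem2 :
  exists C_depth : R,
  forall p : R, 0 < p ->
  exists C_ops : R,
  forall b eps : R, 0 < b -> b <> 1 -> 0 < eps < 1 ->
  exists i : nat,
    INR i <= C_depth * (1 + LogTerm b eps) /\
    (1 - eps) * Rpower b p <= fst (fast_exp b p i) <= (1 + eps) * Rpower b p /\
    INR (snd (fast_exp b p i)) <= C_ops * (1 + LogTerm b eps).
Proof.
  exists 2. intros p Hp.
  set (k := snd (int_pow 1 (Int_part p))).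
  exists (INR k + 5). intros b eps Hb Hb1 Heps.
  assert (HL0 : 0 <= LogTerm b eps) by apply Rmax_l.
  assert (Hlnb : 0 < Rabs (ln b)) by (apply Rabs_pos_lt, ln_neq_0; auto).
  destruct (pow2_exponent_bound (Rabs (ln b) / eps)) as (N & HN & HA).
  { apply Rdiv_lt_0_compat; lra. }
  change (Rmax 0 (ln (Rabs (ln b) / eps))) with (LogTerm b eps) in HN.
  destruct (fast_exp_spec b p N Hb (Rlt_le _ _ Hp)) as (d & Hv & Hd & Ho).
  assert (Hrel := Rpower_add_rel_error b p d eps Heps
                    (Rabs_mul_dyadic_le d (ln b) eps N (proj1 Heps) Hd HA)).
  exists (S N). rewrite Hv. repeat split; try apply Hrel.
  - rewrite S_INR. lra.
  - apply le_INR in Ho. fold k in Ho.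
    rewrite !plus_INR, mult_INR, !S_INR, INR_0 in Ho.
    pose proof (Rmult_le_pos _ _ (pos_INR k) HL0). lra.
Qed.
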